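(* Let $(Y,\tau_Y)$ be a locally convex vector lattice and $X\subset Y$ a sublattice. Let $K=(K(t))_{t\geq0}$ be a family of operators $X\to Y$ and let $S=(S(t))_{t\geq0}$ be a $K$-convex monotone semigroup on $X$ with $S(t)0\geq0$ for all $t\geq0$. Then for all $t\geq0$ and $u,v\in X$, $$|S(t)u-v|\leq|K(t)u-v|+|K(t)(-u)+v|.$$ In particular, $p(S(t)u-v)\leq p(K(t)u-v)+p(K(t)(-u)+v)$ for all $t\geq0$, $u,v\in X$ and every lattice seminorm $p\colon Y\to[0,\infty)$.
   Context: $|u|=u\vee(-u)$. A lattice seminorm is a seminorm $p$ on $Y$ with $p(u)\leq p(v)$ whenever $|u|\leq|v|$. A monotone semigroup on $X$ is a family $S=(S(t))_{t\geq0}$ of maps $X\to X$ with $S(0)u=u$, $S(t)S(s)u=S(t+s)u$ for all $s,t\geq0$, $u\in X$, and each $S(t)$ monotone ($u\leq v\Rightarrow S(t)u\leq S(t)v$). $S$ is $K$-convex if $S(t)(\lambda u+(1-\lambda)v)\leq\lambda S(t)u+(1-\lambda)K(t)v$ for all $t\geq0$, $u,v\in X$, $\lambda\in[0,1]$. *)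

From HB Require Import structures.
From mathcomp Require Import all_boot all_order all_algebra.
From mathcomp Require Import all_classical all_reals all_analysis.
Set Implicit Arguments. Unset Strict Implicit. Unset Printing Implicit Defensive.
Import Order.TTheory GRing.Theory Num.Theory.
Local Open Scope ring_scope.
Local Open Scope classical_set_scope.

Section VectorLattice.
Variables (R : realType) (Y : tvsType R).
Variables (le : Y -> Y -> Prop) (sup : Y -> Y -> Y).

Definition vector_lattice : Prop :=
  [/\ (forall x, le x x),
      (forall x y, le x y -> le y x -> x = y),
      (forall x y z, le x y -> le y z -> le x z),
      (forall x y z, le x y -> le (x + z) (y + z)) &
      (forall (a : R) x y, 0 <= a -> le x y -> le (a *: x) (a *: y))] /\
  (forall x y z, [/\ le x (sup x y), le y (sup x y) &
                     (le x z -> le y z -> le (sup x y) z)]).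

Definition vabs (u : Y) : Y := sup u (- u).

Definition solid_set (V : set Y) : Prop :=
  forall x y, V y -> le (vabs x) (vabs y) -> V x.

Definition convex_set_Y (V : set Y) : Prop :=
  forall x y (l : R), V x -> V y -> 0 <= l <= 1 -> V (l *: x + (1 - l) *: y).

(* locally convex vector lattice: the (locally convex) vector topology of Y
   has a base at 0 of convex solid neighbourhoods (locally convex-solid). *)
Definition locally_convex_lattice : Prop :=
  vector_lattice /\
  forall U : set Y, nbhs (0 : Y) U ->
    exists V : set Y, [/\ nbhs (0 : Y) V, V `<=` U, convex_set_Y V & solid_set V].

Definition sublattice (X : set Y) : Prop :=
  [/\ X 0, (forall x y, X x -> X y -> X (x + y)),
      (forall (a : R) x, X x -> X (a *: x)) &
      (forall x y, X x -> X y -> X (sup x y))].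

Definition lattice_seminorm (p : Y -> R) : Prop :=
  [/\ (forall x, 0 <= p x),
      (forall x y, p (x + y) <= p x + p y),
      (forall (a : R) x, p (a *: x) = `|a| * p x) &
      (forall u v, le (vabs u) (vabs v) -> p u <= p v)].

Definition monotone_semigroup (X : set Y) (S : R -> Y -> Y) : Prop :=
  [/\ (forall t u, 0 <= t -> X u -> X (S t u)),
      (forall u, X u -> S 0 u = u),
      (forall s t u, 0 <= s -> 0 <= t -> X u -> S t (S s u) = S (t + s) u) &
      (forall t u v, 0 <= t -> X u -> X v -> le u v -> le (S t u) (S t v))].

Definition K_convex (X : set Y) (K S : R -> Y -> Y) : Prop :=
  forall t u v (l : R), 0 <= t -> X u -> X v -> 0 <= l <= 1 ->
    le (S t (l *: u + (1 - l) *: v)) (l *: S t u + (1 - l) *: K t v).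

End VectorLattice.

(* Convexity with weights 0 and 1/2 gives S(t)u <= K(t)u and, using
   0 <= S(t)0 <= (S(t)u + K(t)(-u))/2, also -S(t)u <= K(t)(-u).  Subtracting v,
   S(t)u - v and its negative are dominated by K(t)u - v and K(t)(-u) + v, hence
   by the sum of their moduli, which bounds |S(t)u - v|.  A lattice seminorm
   satisfies p |x| = p x, which turns the lattice inequality into the seminorm
   inequality. *)
From HB Require Import structures.
From mathcomp Require Import all_boot all_order all_algebra.
From mathcomp Require Import all_classical all_reals all_analysis.
Import Order.TTheory GRing.Theory Num.Theory.
Local Open Scope ring_scope.
Local Open Scope classical_set_scope.

Section VectorLatticeTheory.
Context {R : realType} {Y : tvsType R}.
Context {le : Y -> Y -> Prop} {sup : Y -> Y -> Y}.
Hypothesis VL : vector_lattice le sup.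

Local Notation "|. x .|" := (vabs sup x).

Lemma vl_le_refl x : le x x.
Proof. by case: VL => -[] . Qed.

Lemma vl_le_anti {x y} : le x y -> le y x -> x = y.
Proof. by case: VL => -[_ + _ _ _] _; apply. Qed.

Lemma vl_le_trans {y x z} : le x y -> le y z -> le x z.
Proof. by case: VL => -[_ _ + _ _] _; apply. Qed.

Lemma vl_lerD2r z {x y} : le x y -> le (x + z) (y + z).
Proof. by case: VL => -[_ _ _ + _] _; apply. Qed.

Lemma vl_lerD {x y z w} : le x y -> le z w -> le (x + z) (y + w).
Proof.
move=> lexy lezw; apply: (vl_le_trans (vl_lerD2r z lexy)).
by rewrite ![y + _]addrC; apply: vl_lerD2r.
Qed.

Lemma vl_lerZ {a : R} {x y} : 0 <= a -> le x y -> le (a *: x) (a *: y).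
Proof. by case: VL => -[_ _ _ _ +] _; apply. Qed.

Lemma vl_le_supl x y : le x (sup x y).
Proof. by case: VL => _ /(_ x y x) []. Qed.

Lemma vl_le_supr x y : le y (sup x y).
Proof. by case: VL => _ /(_ x y x) []. Qed.

Lemma vl_sup_le {x y z} : le x z -> le y z -> le (sup x y) z.
Proof. by case: VL => _ /(_ x y z) []. Qed.

Lemma vl_subr_ge0 {x y} : le 0 (y - x) -> le x y.
Proof. by move=> /(vl_lerD2r x); rewrite add0r subrK. Qed.

Lemma vl_scaler_ge0 (a : R) {x} : 0 < a -> le 0 (a *: x) -> le 0 x.
Proof.
move=> a_gt0; have ainv_ge0 : 0 <= a^-1 by rewrite invr_ge0 ltW.
move=> /(vl_lerZ ainv_ge0).
by rewrite scaler0 scalerA mulVf ?gt_eqF // scale1r.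
Qed.

Lemma vl_le_vabs x : le x |.x.|.
Proof. exact: vl_le_supl. Qed.

Lemma vl_oppr_le_vabs x : le (- x) |.x.|.
Proof. exact: vl_le_supr. Qed.

Lemma vabs_ge0 x : le 0 |.x.|.
Proof.
apply: (vl_scaler_ge0 2); first by rewrite ltr0n.
rewrite scaler_nat mulr2n -(subrr x).
exact: vl_lerD (vl_le_vabs x) (vl_oppr_le_vabs x).
Qed.

Lemma vabs_id {x} : le 0 x -> |.x.| = x.
Proof.
move=> x_ge0; apply: vl_le_anti (vl_le_vabs x).
apply: vl_sup_le (vl_le_refl x) (vl_le_trans _ x_ge0).
by have := vl_lerD2r (- x) x_ge0; rewrite add0r subrr.
Qed.

Lemma vabs_vabs x : |.|.x.|.| = |.x.|.
Proof. exact/vabs_id/vabs_ge0. Qed.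

Lemma vabs_le_addD x a b : le x a -> le (- x) b -> le |.x.| (|.a.| + |.b.|).
Proof.
move=> lexa lexb; apply: vl_sup_le.
- rewrite -[x]addr0; apply: vl_lerD (vabs_ge0 b).
  exact: vl_le_trans lexa (vl_le_vabs a).
- rewrite -[- x]add0r; apply: vl_lerD (vabs_ge0 a) _.
  exact: vl_le_trans lexb (vl_le_vabs b).
Qed.

Section LatticeSeminorm.
Context {p : Y -> R}.
Hypothesis p_lattice : lattice_seminorm le sup p.

Lemma lattice_seminorm_vabs x : p |.x.| = p x.
Proof.
case: p_lattice => _ _ _ p_mono.
by apply/le_anti; rewrite !p_mono ?vabs_vabs //; apply: vl_le_refl.
Qed.

Lemma lattice_seminorm_le_addD {x a b} :
  le |.x.| (|.a.| + |.b.|) -> p x <= p a + p b.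
Proof.
case: p_lattice => _ pD _ p_mono lex.
have sum_ge0 : le 0 (|.a.| + |.b.|).
  by rewrite -[0]addr0; apply: vl_lerD (vabs_ge0 a) (vabs_ge0 b).
rewrite -(lattice_seminorm_vabs a) -(lattice_seminorm_vabs b).
by apply: le_trans (pD _ _); apply: p_mono; rewrite (vabs_id sum_ge0).
Qed.

End LatticeSeminorm.

Section KConvexSemigroup.
Context {X : set Y} {K S : R -> Y -> Y}.
Hypothesis KC : K_convex le X K S.

Lemma K_convex_le {t u} : 0 <= t -> X u -> le (S t u) (K t u).
Proof.
move=> t_ge0 Xu; have := KC t u u 0 t_ge0 Xu Xu.
by rewrite lexx ler01 !scale0r !add0r subr0 !scale1r; apply.
Qed.

Lemma K_convex_oppr_le {t u} : 0 <= t -> X u -> X (- u) ->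
  le 0 (S t 0) -> le (- S t u) (K t (- u)).
Proof.
move=> t_ge0 Xu Xnu St0_ge0.
have half_01 : 0 <= (2^-1 : R) <= 1.
  by rewrite invr_ge0 ler0n invf_le1 ?ler1n ?ltr0n.
have half_compl : 1 - 2^-1 = 2^-1 :> R.
  by rewrite {1}(splitr (1 : R)) mul1r addrK.
have := KC t u (- u) 2^-1 t_ge0 Xu Xnu half_01.
rewrite half_compl scalerN subrr -scalerDr => St0_le.
apply: vl_subr_ge0; rewrite opprK addrC.
apply: (vl_scaler_ge0 2^-1); first by rewrite invr_gt0 ltr0n.
exact: vl_le_trans St0_ge0 St0_le.
Qed.

End KConvexSemigroup.

End VectorLatticeTheory.

Lemma sublatticeN {R : realType} {Y : tvsType R} {sup : Y -> Y -> Y}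
  {X : set Y} {u : Y} : sublattice sup X -> X u -> X (- u).
Proof. by case=> _ _ XZ _ Xu; rewrite -scaleN1r; apply: XZ. Qed.

Theorem lemma2p5 (R : realType) (Y : tvsType R)
  (le : Y -> Y -> Prop) (sup : Y -> Y -> Y) (X : set Y)
  (K S : R -> Y -> Y) :
  locally_convex_lattice le sup ->
  sublattice sup X ->
  monotone_semigroup le X S ->
  K_convex le X K S ->
  (forall t, 0 <= t -> le 0 (S t 0)) ->
  forall t u v, 0 <= t -> X u -> X v ->
    le (vabs sup (S t u - v))
       (vabs sup (K t u - v) + vabs sup (K t (- u) + v)) /\
    (forall p : Y -> R, lattice_seminorm le sup p ->
       p (S t u - v) <= p (K t u - v) + p (K t (- u) + v)).
Proof.
move=> [VL _] subX _ KC S0_ge0 t u v t_ge0 Xu _.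
have Xnu := sublatticeN subX Xu.
have abs_le : le (vabs sup (S t u - v))
                 (vabs sup (K t u - v) + vabs sup (K t (- u) + v)).
  apply: (vabs_le_addD VL).
  - exact (vl_lerD2r VL (- v) (K_convex_le KC t_ge0 Xu)).
  - rewrite opprB addrC; apply: (vl_lerD2r VL).
    exact (K_convex_oppr_le VL KC t_ge0 Xu Xnu (S0_ge0 t t_ge0)).
split=> // p p_lattice.
exact (lattice_seminorm_le_addD VL p_lattice abs_le).
Qed.
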